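(* For every integer $k\ge 2$ there exists a constant $c_k$ depending only on $k$ such that the following holds: if $\Gamma$ is any set of configurations containing at least one configuration $(S,(T_1,T_2))$ with $|S|=k$ (i.e. a $(2,k)$-configuration), then for all positive integers $n,m$ the number $a(n,m,\Gamma)$ of $(n,m)$-elections on the candidate set $\{c_1,\ldots,c_m\}$ avoiding every configuration in $\Gamma$ satisfies $a(n,m,\Gamma)\le m!\cdot c_k^{(n-1)m}$.
   Context: An $(n,m)$-election $(C,\mathcal{P})$ is a set $C$ of $m$ candidates with an ordered $n$-tuple $\mathcal{P}=(V_1,\ldots,V_n)$ of total orders on $C$ (so there are $(m!)^n$ elections on a fixed candidate set; elections differing only in the order of votes are distinct). An $(l,k)$-configuration $(S,\mathcal{T})$ is a set $S$ with $|S|=k$ and a tuple $\mathcal{T}=(T_1,\ldots,T_l)$ of total orders on $S$. The election contains the configuration if there are injective maps $f:\{1,\ldots,l\}\to\{1,\ldots,n\}$ and $g:S\to C$ such that for all distinct $x,y\in S$ and all $i$, $T_i$ ranking $x$ above $y$ implies $V_{f(i)}$ ranks $g(x)$ above $g(y)$; otherwise it avoids the configuration. *)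

From Stdlib Require Import ClassicalEpsilon.
From mathcomp Require Import all_boot all_fingroup.
Set Implicit Arguments. Unset Strict Implicit. Unset Printing Implicit Defensive.

(* A total order on a finite set 'I_k is encoded by its rank permutation
   r : {perm 'I_k}: x is ranked above y iff r x < r y (rank 0 = top).
   This is a bijection between total orders on 'I_k and {perm 'I_k}. *)
Definition ranks_above (k : nat) (r : {perm 'I_k}) (x y : 'I_k) : bool :=
  (r x < r y)%N.

Definition election (n m : nat) := {ffun 'I_n -> {perm 'I_m}}.

(* An (l,k)-configuration; the underlying k-set S is taken to be 'I_k
   (containment is invariant under relabelling S). *)
Record config := Config {
  cfg_l : nat;
  cfg_k : nat;
  cfg_T : {ffun 'I_cfg_l -> {perm 'I_cfg_k}}
}.

Definition contains (n m : nat) (P : election n m) (C : config) : Prop :=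
  exists (f : 'I_(cfg_l C) -> 'I_n) (g : 'I_(cfg_k C) -> 'I_m),
    injective f /\ injective g /\
    forall (i : 'I_(cfg_l C)) (x y : 'I_(cfg_k C)), x != y ->
      ranks_above (cfg_T C i) x y -> ranks_above (P (f i)) (g x) (g y).

Definition avoids_all (n m : nat) (Gamma : config -> Prop) (P : election n m)
  : Prop := forall C, Gamma C -> ~ contains P C.

Definition pbool (P : Prop) : bool :=
  if excluded_middle_informative P then true else false.

Definition a_count (n m : nat) (Gamma : config -> Prop) : nat :=
  #|[set P : election n m | pbool (avoids_all Gamma P) ]|.

From Stdlib Require Import ClassicalEpsilon.
From mathcomp Require Import all_boot all_fingroup zify.
Set Implicit Arguments. Unset Strict Implicit. Unset Printing Implicit Defensive.

(* Fix a (2,k)-configuration (T_1, T_2) in Gamma and let pi = T_1^-1 T_2.  An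
   election is determined by its first vote V_1 together with the n - 1 permutation
   matrices {(V_1 x, V_j x)}, and each of these avoids the permutation matrix of
   pi, since an occurrence of it would be an occurrence of the configuration in
   the votes 1 and j.  It thus suffices that at most c^m 0-1 matrices of size m
   avoid a fixed k-permutation matrix.  This is Klazar's argument (contract into
   2 x 2 blocks and count preimages) on top of the Marcus-Tardos theorem that such
   a matrix has O(m) ones (contract into k^2 x k^2 blocks and count the blocks
   whose entries meet at least k rows or k columns).  Contraction into blocks
   preserves avoidance, which drives both inductions. *)

Lemma leq_exp2rW m n e : m <= n -> m ^ e <= n ^ e.
Proof. by case: e => [|e] // le_mn; rewrite leq_exp2r. Qed.

Lemma card_le_bounded_inj (T : finType) (D : {set T}) (f : T -> nat) s :
  {in D &, injective f} -> (forall x, x \in D -> f x < s) -> #|D| <= s.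
Proof.
move=> inj_f lt_f; rewrite cardE -(size_map f) -(size_iota 0 s).
apply: uniq_leq_size => [|_ /mapP[x xD ->]].
  by rewrite map_inj_in_uniq ?enum_uniq // => x y; rewrite !mem_enum; apply: inj_f.
by rewrite mem_iota add0n lt_f // -mem_enum.
Qed.

Lemma card_same_quotient N q j (D : {set 'I_N}) :
  0 < q -> (forall x, x \in D -> x %/ q = j) -> #|D| <= q.
Proof.
move=> q_gt0 divD; apply: (@card_le_bounded_inj _ _ (fun x : 'I_N => x %% q)).
  move=> x y xD yD /= eq_mod; apply: val_inj => /=.
  by rewrite (divn_eq x q) (divn_eq y q) eq_mod !divD.
by move=> x _; rewrite ltn_pmod.
Qed.

Lemma card_fibres_le (T U : finType) (D : {set T}) (f : T -> U) m :
  (forall v, #|[set x in D | f x == v]| <= m) -> #|D| <= m * #|f @: D|.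
Proof.
move=> fibre_le; rewrite -sum1_card (partition_big_imset f) /= mulnC -sum_nat_const.
apply: leq_sum => v _; rewrite sum1_card; apply: leq_trans (fibre_le v).
by apply: subset_leq_card; apply/subsetP => x; rewrite !inE.
Qed.

Lemma sum_if_const (T : finType) (B : {set T}) (P : pred T) c :
  \sum_(b in B) (if P b then c else 0) = #|[set b in B | P b]| * c.
Proof.
rewrite -big_mkcondr /= sum_nat_const; congr (_ * _).
by apply: eq_card => x; rewrite !inE.
Qed.

Lemma ltn_ord_trans N : transitive (fun x y : 'I_N => x < y).
Proof. by move=> y x z; apply: ltn_trans. Qed.

Lemma increasing_inj k N (r : 'I_k -> 'I_N) : {homo r : i j / i < j} -> injective r.
Proof.
move=> r_incr x y eq_r; apply: val_inj.
by case: (ltngtP x y) => // lt_xy; have := r_incr _ _ lt_xy; rewrite eq_r ltnn.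
Qed.

Lemma sorted_enum_set N (U : {set 'I_N}) : sorted (fun x y : 'I_N => x < y) (enum U).
Proof.
have sorted_ord : sorted (fun x y : 'I_N => x < y) (enum 'I_N).
  by have := iota_ltn_sorted 0 N; rewrite -val_enum_ord sorted_map.
by rewrite /enum_mem -enumT; apply: sorted_filter (@ltn_ord_trans N) _ _ sorted_ord.
Qed.

Lemma increasing_in_set N (U : {set 'I_N}) k : k <= #|U| ->
  exists h : 'I_k -> 'I_N, {homo h : i j / i < j} /\ forall i, h i \in U.
Proof.
case: k => [|k] le_kU.
  by exists (widen_ord (leq0n N)); split; case.
have [x0 _] : exists x0, x0 \in U by apply/card_gt0P; apply: leq_trans le_kU.
have lt_size (i : 'I_k.+1) : i < size (enum U) by rewrite -cardE; apply: leq_trans le_kU.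
exists (fun i => nth x0 (enum U) i); split=> [i j lt_ij|i]; last by rewrite -mem_enum mem_nth.
by apply: (sorted_ltn_nth (@ltn_ord_trans N) x0 (sorted_enum_set U)); rewrite ?inE.
Qed.

Definition contains_pattern k (p : {perm 'I_k}) N (A : {set 'I_N * 'I_N}) : bool :=
  [exists r : {ffun 'I_k -> 'I_N}, exists c : {ffun 'I_k -> 'I_N},
    [forall i : 'I_k, forall j : 'I_k, (i < j) ==> (r i < r j) && (c i < c j)]
    && [forall i, (r i, c (p i)) \in A]].

Lemma contains_patternP k (p : {perm 'I_k}) N (A : {set 'I_N * 'I_N}) :
  reflect (exists r c : 'I_k -> 'I_N, [/\ {homo r : i j / i < j}, {homo c : i j / i < j}
                                         & forall i, (r i, c (p i)) \in A])
          (contains_pattern p A).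
Proof.
apply: (iffP existsP) => [[r /existsP[c /andP[/forallP incr /forallP rcA]]]|].
  exists r, c; split=> // i j lt_ij.
    by have /forallP/(_ j)/implyP/(_ lt_ij)/andP[] := incr i.
  by have /forallP/(_ j)/implyP/(_ lt_ij)/andP[] := incr i.
move=> [r [c [r_incr c_incr rcA]]]; exists (finfun r); apply/existsP; exists (finfun c).
apply/andP; split; apply/forallP => i; rewrite ?ffunE //.
by apply/forallP => j; apply/implyP => lt_ij; rewrite !ffunE r_incr ?c_incr.
Qed.

Definition divo q N (x : 'I_N) : 'I_N := Ordinal (leq_ltn_trans (leq_div x q) (ltn_ord x)).
Arguments divo q {N} x.

Definition block q N (a : 'I_N * 'I_N) := (divo q a.1, divo q a.2).
Arguments block q {N} a.

Lemma ltn_divo q N (x y : 'I_N) : divo q x < divo q y -> x < y.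
Proof. by apply: contraTT; rewrite -!leqNgt; apply: leq_div2r. Qed.

Lemma contains_pattern_block k (p : {perm 'I_k}) q N (A : {set 'I_N * 'I_N}) :
  contains_pattern p (block q @: A) -> contains_pattern p A.
Proof.
case/contains_patternP => r [c [r_incr c_incr rcA]].
have /fin_all_exists[a aA] : forall i, exists a, a \in A /\ block q a = (r i, c (p i)).
  by move=> i; have /imsetP[a aA ->] := rcA i; exists a.
have row_a i : divo q (a i).1 = r i by case: (aA i) => _ [].
have col_a i : divo q (a i).2 = c (p i) by case: (aA i) => _ [].
apply/contains_patternP; exists (fun i => (a i).1), (fun j => (a ((p^-1)%g j)).2).
split=> [i j lt_ij|i j lt_ij|i].
- by apply: (@ltn_divo q); rewrite !row_a r_incr.
- by apply: (@ltn_divo q); rewrite !col_a !permKV c_incr.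
- by rewrite permK -surjective_pairing; case: (aA i).
Qed.

Definition transposed N (A : {set 'I_N * 'I_N}) := swap_pair @: A.

Lemma mem_transposed N (A : {set 'I_N * 'I_N}) x y : ((x, y) \in transposed A) = ((y, x) \in A).
Proof. by rewrite /transposed (can_imset_pre _ swap_pairK) inE. Qed.

Lemma card_transposed N (A : {set 'I_N * 'I_N}) : #|transposed A| = #|A|.
Proof. exact/card_imset/(can_inj swap_pairK). Qed.

Lemma block_transposed q N (A : {set 'I_N * 'I_N}) :
  block q @: transposed A = transposed (block q @: A).
Proof. by rewrite /transposed -!imset_comp; apply: eq_imset => -[]. Qed.

Lemma contains_pattern_transposed k (p : {perm 'I_k}) N (A : {set 'I_N * 'I_N}) :
  contains_pattern (p^-1)%g (transposed A) -> contains_pattern p A.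
Proof.
case/contains_patternP => r [c [r_incr c_incr rcA]].
apply/contains_patternP; exists c, r; split=> // i.
by have := rcA (p i); rewrite permK mem_transposed.
Qed.

(* A 0-1 matrix is the set of its one-entries.  Matrices of every size s live in
   one ambient type 'I_N * 'I_N, so that contracting into blocks keeps the type;
   square N s holds the entries of an s x s matrix. *)
Definition square N s : {set 'I_N * 'I_N} := [set a : 'I_N * 'I_N | (a.1 < s) && (a.2 < s)].

Lemma card_square N s : #|square N s| <= s * s.
Proof.
set R := [set x : 'I_N | x < s].
have card_R : #|R| <= s.
  by apply: (@card_le_bounded_inj _ _ val) => [x y _ _ /val_inj|x] //; rewrite inE.
rewrite (_ : square N s = setX R R) ?cardsX ?leq_mul //.
by apply/setP => -[x y]; rewrite !inE.
Qed.

Lemma transposed_square N s (A : {set 'I_N * 'I_N}) :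
  (transposed A \subset square N s) = (A \subset square N s).
Proof.
rewrite /transposed sub_imset_pre (_ : swap_pair @^-1: square N s = square N s) //.
by apply/setP => -[x y]; rewrite !inE andbC.
Qed.

Lemma block_square q N s (A : {set 'I_N * 'I_N}) :
  A \subset square N s -> block q @: A \subset square N (s %/ q).+1.
Proof.
move=> /subsetP sqA; apply/subsetP => _ /imsetP[a /sqA aA ->]; move: aA.
by rewrite !inE /= !ltnS => /andP[lt1 lt2]; rewrite !leq_div2r // ltnW.
Qed.

Section MarcusTardos.

Variables (k q N : nat).
Hypotheses (k_gt0 : 0 < k) (q_gt0 : 0 < q).
Implicit Types (A : {set 'I_N * 'I_N}) (b : 'I_N * 'I_N).

Definition block_entries A b := [set a in A | block q a == b].
Definition block_cols A b := [set a.2 | a in block_entries A b].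
Definition block_rows A b := [set a.1 | a in block_entries A b].
Definition wide_blocks A := [set b in block q @: A | k <= #|block_cols A b|].
Definition tall_blocks A := [set b in block q @: A | k <= #|block_rows A b|].

Lemma block_cols_div A b y : y \in block_cols A b -> y %/ q = b.2.
Proof. by case/imsetP => a; rewrite inE => /andP[_ /eqP <-] ->. Qed.

Lemma block_rows_transposed A b : block_rows A b = block_cols (transposed A) (swap_pair b).
Proof.
apply/setP => y; apply/imsetP/imsetP => -[[u v]]; rewrite !inE => /andP[uvA /eqP buv] ->.
  by exists (v, u); rewrite // inE mem_transposed uvA -buv; apply/eqP.
by exists (v, u); rewrite // inE -mem_transposed uvA -[b]swap_pairK -buv; apply/eqP.
Qed.

Lemma card_block_cols A b : #|block_cols A b| <= q.
Proof. exact: card_same_quotient q_gt0 (@block_cols_div A b). Qed.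

Lemma card_block_rows A b : #|block_rows A b| <= q.
Proof. by rewrite block_rows_transposed card_block_cols. Qed.

Lemma contains_pattern_wide (p : {perm 'I_k}) A (F : {set 'I_N * 'I_N}) (S : {set 'I_N}) :
  k <= #|S| -> k <= #|[set b.1 | b in F]| -> {in F, forall b, S \subset block_cols A b} ->
  contains_pattern p A.
Proof.
move=> le_kS le_kF sub_S.
have [rho [rho_incr rhoF]] := increasing_in_set le_kF.
have [sig [sig_incr sigS]] := increasing_in_set le_kS.
have /fin_all_exists[a aP] :
    forall i, exists a, [/\ a \in A, divo q a.1 = rho i & a.2 = sig (p i)].
  move=> i; have /imsetP[b bF ->] := rhoF i.
  have /imsetP[a] := subsetP (sub_S b bF) _ (sigS (p i)).
  by rewrite inE => /andP[aA /eqP <-] ->; exists a.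
apply/contains_patternP; exists (fun i => (a i).1), sig; split=> // [i j lt_ij|i].
  by apply: (@ltn_divo q); case: (aP i) (aP j) => _ -> _ [_ -> _]; apply: rho_incr.
by case: (aP i) => aA _ <-; rewrite -surjective_pairing.
Qed.

(* Fewer than k wide blocks of one block column share the same set of columns,
   and that set is one of the 2^q subsets of the block column. *)
Lemma card_wide_blocks_column (p : {perm 'I_k}) A (j : 'I_N) : ~~ contains_pattern p A ->
  #|[set b in wide_blocks A | b.2 == j]| <= k.-1 * 2 ^ q.
Proof.
move=> noA; set D := [set b in _ | _].
apply: leq_trans (@card_fibres_le _ _ D (block_cols A) k.-1 _) _.
  move=> S; set F := [set b in D | _]; rewrite -ltnS prednK // ltnNge.
  apply: contra noA => le_kF.
  have [b0] : exists b0, b0 \in F by apply/card_gt0P; apply: leq_trans le_kF.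
  rewrite !inE => /andP[/andP[/andP[_ wide_b0] _] /eqP eS]; rewrite eS in wide_b0.
  apply: (@contains_pattern_wide p A F S wide_b0).
    rewrite card_in_imset // => -[x1 x2] [y1 y2]; rewrite !inE /=.
    by move=> /andP[/andP[_ /eqP ->] _] /andP[/andP[_ /eqP ->] _] ->.
  by move=> b; rewrite !inE => /andP[_ /eqP ->].
rewrite leq_mul2l; apply/orP; right.
have : block_cols A @: D \subset powerset [set y : 'I_N | y %/ q == j].
  apply/subsetP => S /imsetP[b]; rewrite !inE => /andP[_ /eqP bj] ->.
  by apply/subsetP => y /block_cols_div; rewrite inE bj => ->.
move/subset_leq_card; rewrite card_powerset => /leq_trans; apply.
by rewrite leq_pexp2l // (@card_same_quotient _ q j) // => y; rewrite inE => /eqP.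
Qed.

Lemma card_wide_blocks (p : {perm 'I_k}) A s : ~~ contains_pattern p A ->
  block q @: A \subset square N s -> #|wide_blocks A| <= k.-1 * 2 ^ q * s.
Proof.
move=> noA sqB.
apply: leq_trans (card_fibres_le (fun j => @card_wide_blocks_column p A j noA)) _.
rewrite leq_mul2l; apply/orP; right.
apply: (@card_le_bounded_inj _ _ val) => [x y _ _ /val_inj //|_ /imsetP[b + ->]].
by rewrite inE => /andP[/(subsetP sqB)]; rewrite inE => /andP[].
Qed.

Lemma tall_blocks_transposed A : tall_blocks A = transposed (wide_blocks (transposed A)).
Proof.
apply/setP => -[x y]; rewrite mem_transposed !inE block_transposed mem_transposed.
by rewrite block_rows_transposed.
Qed.

Lemma card_tall_blocks (p : {perm 'I_k}) A s : ~~ contains_pattern p A ->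
  block q @: A \subset square N s -> #|tall_blocks A| <= k.-1 * 2 ^ q * s.
Proof.
move=> noA sqB; rewrite tall_blocks_transposed card_transposed.
apply: (@card_wide_blocks (p^-1)%g).
  exact: contra (@contains_pattern_transposed _ p _ A) noA.
by rewrite block_transposed transposed_square.
Qed.

Lemma card_block_entries A b :
  #|block_entries A b| <= k.-1 * k.-1 + (if k <= #|block_cols A b| then q * q else 0)
                                       + (if k <= #|block_rows A b| then q * q else 0).
Proof.
have : block_entries A b \subset setX (block_rows A b) (block_cols A b).
  by apply/subsetP => a aA; rewrite inE !imset_f.
move/subset_leq_card; rewrite cardsX => /leq_trans; apply.
have le_cols := card_block_cols A b; have le_rows := card_block_rows A b.
have le_qq := leq_mul le_rows le_cols.
case: ifP => [_|narrow]; first by rewrite (leq_trans le_qq) // -addnA addnCA leq_addr.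
case: ifP => [_|short]; first by rewrite (leq_trans le_qq) // leq_addl.
by rewrite !addn0 leq_mul // -ltnS prednK // ltnNge ?short ?narrow.
Qed.

Lemma marcus_tardos_step (p : {perm 'I_k}) A s : ~~ contains_pattern p A ->
  block q @: A \subset square N s ->
  #|A| <= k.-1 * k.-1 * #|block q @: A| + 2 * (q * q * (k.-1 * 2 ^ q * s)).
Proof.
move=> noA sqB; rewrite -sum1_card (partition_big_imset (block q)) /=.
apply: leq_trans (_ : \sum_(b in block q @: A)
    (k.-1 * k.-1 + (if k <= #|block_cols A b| then q * q else 0)
                 + (if k <= #|block_rows A b| then q * q else 0)) <= _).
  apply: leq_sum => b _; rewrite sum1_card; apply: leq_trans (card_block_entries A b).
  by apply: subset_leq_card; apply/subsetP => a; rewrite !inE.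
rewrite !big_split /= !sum_if_const sum_nat_const mulnC -addnA leq_add2l mul2n -addnn.
by apply: leq_add; rewrite mulnC leq_mul2l; apply/orP; right;
  [exact: card_wide_blocks noA sqB | exact: card_tall_blocks noA sqB].
Qed.

End MarcusTardos.

Lemma marcus_tardos_arith k t s : 2 <= k -> k * k <= t -> t * (k * k) <= s ->
  (k.-1 * k.-1 * (k * k * (k * k)) + 1) * t.+1 <= k * k * (k * k) * s.
Proof.
move=> k_ge2 le_t le_s; set K := k * k; set c := _ + 1.
have [u def_k] : exists u, k = u.+2 by exists k.-2; lia.
have K_gt0 : 0 < K by rewrite /K def_k.
have poly : c * K.+1 <= K * (K * (K * K)) by rewrite /c /K def_k /=; nia.
rewrite -(leq_pmul2l K_gt0) mulnCA.
apply: leq_trans (_ : c * (K.+1 * t) <= _); first by rewrite leq_mul2l; lia.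
rewrite mulnA; apply: leq_trans (leq_mul poly (leqnn t)) _.
apply: leq_trans (_ : K * (K * K * (t * K)) <= _); last by rewrite !leq_mul2l le_s !orbT.
by rewrite [t * K]mulnC !mulnA.
Qed.

Theorem marcus_tardos k : 2 <= k -> exists c, forall (p : {perm 'I_k}) N s (A : {set 'I_N * 'I_N}),
  A \subset square N s -> ~~ contains_pattern p A -> #|A| <= c * s.
Proof.
move=> k_ge2; set q := k * k; set W := 2 * (q * q * (k.-1 * 2 ^ q)).
have k_gt0 : 0 < k by apply: leq_trans k_ge2.
have q_ge4 : 4 <= q by rewrite /q; nia.
have q_gt0 : 0 < q by apply: leq_trans q_ge4.
have W_gt0 : 0 < W by rewrite /W !muln_gt0 expn_gt0 k_gt0 ltn_predRL k_ge2.
(* By induction on the block contraction, of size t.+1 with t = s %/ q,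
   marcus_tardos_step gives f(s) <= (k-1)^2 f(t.+1) + W t.+1. *)
exists (W * (q * q)) => p N s; elim/ltn_ind: s => s IH A sqA noA.
have [lt_s_qq | le_qq_s] := ltnP s (q * q).
  apply: leq_trans (subset_leq_card sqA) _; apply: leq_trans (card_square N s) _.
  by rewrite leq_mul2r (leq_trans (ltnW lt_s_qq)) ?leq_pmull ?orbT.
set t := s %/ q.
have le_tq_s : t * q <= s by apply: leq_divM.
have le_q_t : q <= t by rewrite leq_divRL.
have sqB := block_square q sqA.
have noB := contra (@contains_pattern_block _ p q _ A) noA.
have IHB := IH t.+1 (ltac:(nia)) _ sqB noB.
apply: leq_trans (marcus_tardos_step k_gt0 q_gt0 noA sqB) _.
apply: leq_trans (_ : W * ((k.-1 * k.-1 * (q * q) + 1) * t.+1) <= _).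
  rewrite mulnDl mul1n mulnDr leq_add //; last by rewrite /W !mulnA.
  by apply: leq_trans (leq_mul (leqnn _) IHB) _; rewrite /W; lia.
by rewrite -[W * _ * s]mulnA leq_mul2l (marcus_tardos_arith k_ge2 le_q_t le_tq_s) orbT.
Qed.

Definition avoiders k (p : {perm 'I_k}) N s : {set {set 'I_N * 'I_N}} :=
  [set A : {set 'I_N * 'I_N} | (A \subset square N s) && ~~ contains_pattern p A].

Definition block2_pattern N (A : {set 'I_N * 'I_N}) : {ffun 'I_N * 'I_N -> {set 'I_2 * 'I_2}} :=
  [ffun b => [set d : 'I_2 * 'I_2 | [exists a in A,
     [&& block 2 a == b, a.1 %% 2 == d.1 & a.2 %% 2 == d.2]]]].

Lemma block2_pattern_sub N (A A' : {set 'I_N * 'I_N}) :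
  block2_pattern A = block2_pattern A' -> A \subset A'.
Proof.
move=> eq_pat; apply/subsetP => -[x y] xyA.
have : (inord (x %% 2), inord (y %% 2)) \in block2_pattern A (block 2 (x, y)).
  by rewrite ffunE inE; apply/existsP; exists (x, y); rewrite xyA !inordK ?ltn_pmod ?eqxx.
rewrite eq_pat ffunE inE => /existsP[[x' y'] /and4P[xyA' /eqP [dx dy]]].
rewrite /= !inordK ?ltn_pmod // => /eqP mx /eqP my.
have -> : x = x' by apply: val_inj; rewrite /= (divn_eq x 2) (divn_eq x' 2) mx dx.
have -> : y = y' by apply: val_inj; rewrite /= (divn_eq y 2) (divn_eq y' 2) my dy.
exact: xyA'.
Qed.

Lemma card_block2_fibre N (B : {set 'I_N * 'I_N}) :
  #|[set A : {set 'I_N * 'I_N} | block 2 @: A == B]| <= 2 ^ (4 * #|B|).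
Proof.
have pattern_inj : injective (@block2_pattern N).
  move=> A A' eq_pat; apply/eqP.
  by rewrite eqEsubset (block2_pattern_sub eq_pat) (block2_pattern_sub (esym eq_pat)).
rewrite -(card_imset _ pattern_inj).
have : @block2_pattern N @: [set A : {set _} | block 2 @: A == B]
         \subset pffun_on set0 B (powerset [set: 'I_2 * 'I_2]).
  apply/subsetP => f /imsetP[A]; rewrite inE => /eqP <- ->.
  apply/pffun_onP; split=> [|b _]; last by rewrite powersetE subsetT.
  apply/subsetP => b; rewrite inE ffunE => /set0Pn[d]; rewrite inE.
  by case/existsP => a /and4P[aA /eqP <- _ _]; rewrite imset_f.
by move/subset_leq_card; rewrite card_pffun_on card_powerset cardsT card_prod card_ord -expnM.
Qed.

Theorem klazar k : 2 <= k ->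
  exists e, forall (p : {perm 'I_k}) N s, #|avoiders p N s| <= 2 ^ (e * s).
Proof.
move=> k_ge2; have [c mt_bound] := marcus_tardos k_ge2.
exists (12 * c.+1) => p N s; elim/ltn_ind: s => s IH.
have [lt_s3 | le_3s] := ltnP s 3.
  have : avoiders p N s \subset powerset (square N s).
    by apply/subsetP => A; rewrite !inE => /andP[].
  move/subset_leq_card; rewrite card_powerset => /leq_trans; apply.
  by rewrite leq_pexp2l // (leq_trans (card_square N s)) //; nia.
set s' := (s %/ 2).+1.
have avoid_block A : A \in avoiders p N s -> block 2 @: A \in avoiders p N s'.
  rewrite !inE => /andP[sqA noA]; rewrite block_square //=.
  exact: contra (@contains_pattern_block _ p 2 _ A) noA.
have fibre_le B : #|[set A in avoiders p N s | block 2 @: A == B]| <= 2 ^ (4 * (c.+1 * s')).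
  have [-> | [A]] := set_0Vmem [set A in avoiders p N s | block 2 @: A == B].
    by rewrite cards0.
  rewrite inE => /andP[/avoid_block]; rewrite inE => /andP[sqB noB] /eqP eqB.
  apply: leq_trans (_ : #|[set A : {set 'I_N * 'I_N} | block 2 @: A == B]| <= _).
    by apply: subset_leq_card; apply/subsetP => A'; rewrite !inE => /andP[].
  rewrite (leq_trans (card_block2_fibre B)) // leq_pexp2l // leq_mul2l /=.
  by rewrite -eqB (leq_trans (mt_bound _ _ _ _ sqB noB)) // leq_mul2r leqnSn orbT.
have image_le :
    #|[set block 2 @: A | A : {set 'I_N * 'I_N} in avoiders p N s]| <= 2 ^ (12 * c.+1 * s').
  apply: leq_trans (IH s' _) => /=; last by rewrite /s'; lia.
  by apply: subset_leq_card; apply/subsetP => _ /imsetP[A /avoid_block ? ->].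
apply: leq_trans (card_fibres_le fibre_le) _.
apply: leq_trans (leq_mul (leqnn _) image_le) _.
(* 4 s' <= 3 s for s >= 3 absorbs the 2^(4 (c+1) s') preimages per contraction. *)
have le_s' : 4 * s' <= 3 * s by rewrite /s'; lia.
by rewrite -expnD leq_pexp2l //; nia.
Qed.

Definition vote_matrix m (sg tau : {perm 'I_m}) : {set 'I_m * 'I_m} :=
  [set (sg x, tau x) | x : 'I_m].

Lemma vote_matrix_inj m (sg : {perm 'I_m}) : injective (vote_matrix sg).
Proof.
move=> t1 t2 eq_mx; apply/permP => x.
have : (sg x, t1 x) \in vote_matrix sg t2 by rewrite -eq_mx imset_f.
by case/imsetP => y _ [/perm_inj <-].
Qed.

Lemma ord2_cases (i : 'I_2) : i = ord0 \/ i = ord_max.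
Proof. by case: i => -[|[|i]] // lt_i2; [left | right]; apply: val_inj. Qed.

Lemma vote_matrix_avoids k (T : {ffun 'I_2 -> {perm 'I_k}}) (Gamma : config -> Prop) n m
    (P : election n m) (u v : 'I_n) :
  Gamma (Config T) -> avoids_all Gamma P -> u != v ->
  ~~ contains_pattern ((T ord0)^-1 * T ord_max)%g (vote_matrix (P u) (P v)).
Proof.
move=> GammaT avP neq_uv; apply/contains_patternP => -[r [c [r_incr c_incr rcM]]].
have /fin_all_exists[x Px] :
    forall i, exists x, (P u x, P v x) = (r i, c (((T ord0)^-1 * T ord_max)%g i)).
  by move=> i; have /imsetP[x _ ->] := rcM i; exists x.
have Pu y : P u (x (T ord0 y)) = r (T ord0 y) by case: (Px (T ord0 y)).
have Pv y : P v (x (T ord0 y)) = c (T ord_max y).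
  by case: (Px (T ord0 y)) => _ ->; rewrite permM permK.
apply: (avP _ GammaT).
exists (fun i : 'I_2 => if val i is 0 then u else v), (fun y => x (T ord0 y)); split=> [|/=].
  move=> i j; case: (ord2_cases i) (ord2_cases j) => -> [] -> //= eq_uv;
    by move: neq_uv; rewrite eq_uv eqxx.
split=> [y y' /(congr1 (P u)) | i y y' _].
  by rewrite !Pu => /(increasing_inj r_incr) /perm_inj.
by case: (ord2_cases i) => -> /=; rewrite /ranks_above ?Pu ?Pv;
  [apply: r_incr | apply: c_incr].
Qed.

Lemma pboolP (P : Prop) : pbool P -> P.
Proof. by rewrite /pbool; case: excluded_middle_informative. Qed.

Theorem mainTheorem4 :
  forall k : nat, (2 <= k)%N ->
  exists c : nat,
    forall Gamma : config -> Prop,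
      (exists C : config, Gamma C /\ cfg_l C = 2 /\ cfg_k C = k) ->
      forall n m : nat, (0 < n)%N -> (0 < m)%N ->
        (a_count n m Gamma <= m`! * c ^ ((n - 1) * m))%N.
Proof.
move=> k k_ge2; have [e card_avoiders] := klazar k_ge2; exists (2 ^ e).
move=> Gamma [[l k' T] [GammaT [/= l2 kk]]] n m n_gt0 _; subst l k'.
case: n n_gt0 => // n _; rewrite subSS subn0.
set pi := ((T ord0)^-1 * T ord_max)%g.
pose code (P : election n.+1 m) :=
  (P ord0, [ffun j : 'I_n => vote_matrix (P ord0) (P (lift ord0 j))]).
have code_inj : injective code.
  move=> P P' [eq0 /ffunP eq_mx]; apply/ffunP => i.
  case: (unliftP ord0 i) => [j ->|->] //.
  by have := eq_mx j; rewrite !ffunE eq0 => /vote_matrix_inj.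
have code_avoiders : code @: [set P | pbool (avoids_all Gamma P)]
    \subset setX [set: {perm 'I_m}] [set f | f \in ffun_on (mem (avoiders pi m m))].
  apply/subsetP => codeP /imsetP[P]; rewrite inE => /pboolP avP ->.
  rewrite !inE /=; apply/ffun_onP => j; rewrite ffunE inE.
  apply/andP; split; first by apply/subsetP => a _; rewrite inE !ltn_ord.
  exact: vote_matrix_avoids GammaT avP (neq_lift ord0 j).
rewrite /a_count -(card_imset _ code_inj); apply: leq_trans (subset_leq_card code_avoiders) _.
rewrite cardsX cardsT card_Sn cardsE card_ffun_on card_ord leq_mul2l mulnC expnM.
by apply/orP; right; apply: leq_exp2rW; rewrite -expnM card_avoiders.
Qed.
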